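(* Let $X_{\Omega_-}$ and $X_{\Omega_+}$ be convex toric domains in $\mathbb{R}^4$. Suppose that for every pair of relatively prime positive integers $a,b>0$ we have $\|(a,b)\|^*_{\Omega_-}\le\|(a,b)\|^*_{\Omega_+}$. Then $\Omega_-\subset\Omega_+$.
   Context: Let $\mu:\mathbb{C}^2\to\mathbb{R}^2_{\ge0}$, $\mu(z_1,z_2)=(\pi|z_1|^2,\pi|z_2|^2)$. Let $\Omega\subset\mathbb{R}^2_{\ge0}$ be compact with $0\in\operatorname{int}(\Omega)$, whose boundary consists of the segment from $(0,0)$ to $(a(\Omega),0)$, the segment from $(0,0)$ to $(0,b(\Omega))$ (with $a(\Omega),b(\Omega)>0$), and a continuous curve $\partial_+\Omega$ from $(a(\Omega),0)$ to $(0,b(\Omega))$ meeting the axes only at its endpoints. $X_\Omega=\mu^{-1}(\Omega)$ is a convex toric domain if $\{\mu\in\mathbb{R}^2:(|\mu_1|,|\mu_2|)\in\Omega\}$ is convex. For $(a,b)\in\mathbb{Z}^2_{\ge0}$, $\|(a,b)\|^*_\Omega=\max\{ax+by:(x,y)\in\Omega\}$ (in the paper this quantity is the $\Omega$-action $\mathcal{A}_\Omega(e_{a,b})$). *)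

From HB Require Import structures.
From mathcomp Require Import all_boot all_order all_algebra.
From mathcomp Require Import all_classical all_reals all_analysis.
Set Implicit Arguments. Unset Strict Implicit. Unset Printing Implicit Defensive.
Import Order.TTheory GRing.Theory Num.Theory.
Import numFieldNormedType.Exports.
Local Open Scope classical_set_scope.
Local Open Scope ring_scope.

Section Toric.
Variable R : realType.

Definition bdry (A : set (R * R)) : set (R * R) := closure A `\` interior A.

Definition toric_region (Om : set (R * R)) : Prop :=
  [/\ Om `<=` [set p | 0 <= p.1 /\ 0 <= p.2],
      compact Om,
      (exists2 e : R, 0 < e &
         [set p | 0 <= p.1 < e /\ 0 <= p.2 < e] `<=` Om) &
      exists a b : R, 0 < a /\ 0 < b /\
      exists g : R -> R * R,
        [/\ {within `[0, 1], continuous g},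
            g 0 = (a, 0), g 1 = (0, b),
            (forall t : R, 0 < t < 1 -> 0 < (g t).1 /\ 0 < (g t).2) &
            bdry Om =
              [set p | 0 <= p.1 <= a /\ p.2 = 0]
              `|` [set p | p.1 = 0 /\ 0 <= p.2 <= b]
              `|` (g @` `[0, 1])]].

Definition symmetrize (Om : set (R * R)) : set (R * R) :=
  [set p | Om (`|p.1|, `|p.2|)].

Definition convex_set2 (S : set (R * R)) : Prop :=
  forall p q, S p -> S q -> forall t : R, 0 <= t <= 1 ->
    S (t * p.1 + (1 - t) * q.1, t * p.2 + (1 - t) * q.2).

Definition convex_toric_domain (Om : set (R * R)) : Prop :=
  toric_region Om /\ convex_set2 (symmetrize Om).

Definition dual_norm (Om : set (R * R)) (a b : nat) : R :=
  sup [set a%:R * p.1 + b%:R * p.2 | p in Om].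

End Toric.

From HB Require Import structures.
From mathcomp Require Import all_boot all_order all_algebra.
From mathcomp Require Import all_classical all_reals all_analysis.
From mathcomp Require Import ring lra.
Set Implicit Arguments. Unset Strict Implicit. Unset Printing Implicit Defensive.
Import Order.TTheory GRing.Theory Num.Theory.
Import numFieldNormedType.Exports.
Local Open Scope classical_set_scope.
Local Open Scope ring_scope.

(* Suppose x lies in Omega_- but not in Omega_+.  The point q of the compact
   convex set Omega_+ nearest to x yields the direction u = x - q, which
   strictly separates x from Omega_+; since Omega_+ is closed downwards in the
   quadrant, u >= 0.  Rounding n u up to an integer vector k loses at most
   y_1 + y_2 <= S on Omega_+, so k still separates x from Omega_+ as soon as
   n times the separation margin exceeds S.  Dividing k by its gcd gives a
   coprime pair (a, b) separating x from Omega_+, and then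
   ||(a,b)||^*_{Omega_+} < a x_1 + b x_2 <= ||(a,b)||^*_{Omega_-}. *)

Section Separation.
Variable R : realType.
Implicit Types (K : set (R * R)) (p q u x y : R * R).

Definition quadrant : set (R * R) := [set p | 0 <= p.1 /\ 0 <= p.2].

Definition down_closed K : Prop :=
  forall p q, K p -> 0 <= q.1 <= p.1 -> 0 <= q.2 <= p.2 -> K q.

Definition dot u p : R := u.1 * p.1 + u.2 * p.2.

Definition sqdist p q : R := (p.1 - q.1) ^+ 2 + (p.2 - q.2) ^+ 2.

Definition separates K x u : Prop :=
  exists2 c, (forall y, K y -> dot u y <= c) & c < dot u x.

Lemma convex_comb_between (a b s : R) :
  a <= s <= b -> exists2 t, 0 <= t <= 1 & s = t * b + (1 - t) * a.
Proof.
move=> /andP[le_as le_sb]; have [lt_ab|le_ba] := ltP a b.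
  have ba_gt0 : 0 < b - a by rewrite subr_gt0.
  exists ((s - a) / (b - a)); last by field; rewrite gt_eqF.
  apply/andP; split; first by apply: divr_ge0; lra.
  by rewrite ler_pdivrMr // mul1r lerB.
by exists 0; rewrite ?lexx ?ler01 //; lra.
Qed.

Lemma convex_set2_segment1 K (a b c s : R) :
  convex_set2 K -> K (a, c) -> K (b, c) -> a <= s <= b -> K (s, c).
Proof.
move=> convK Ka Kb /convex_comb_between[t t01 ->].
have := convK _ _ Kb Ka t t01; rewrite /=.
by have -> : t * c + (1 - t) * c = c by ring.
Qed.

Lemma convex_set2_segment2 K (a b c s : R) :
  convex_set2 K -> K (c, a) -> K (c, b) -> a <= s <= b -> K (c, s).
Proof.
move=> convK Ka Kb /convex_comb_between[t t01 ->].
have := convK _ _ Kb Ka t t01; rewrite /=.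
by have -> : t * c + (1 - t) * c = c by ring.
Qed.

Lemma sqdist_gt0 p q : p <> q -> 0 < sqdist p q.
Proof.
move=> neq_pq; rewrite lt0r addr_ge0 ?sqr_ge0 // andbT.
rewrite paddr_eq0 ?sqr_ge0 // !sqrf_eq0 !subr_eq0.
apply/negP => /andP[/eqP eq1 /eqP eq2]; apply: neq_pq.
by rewrite [p]surjective_pairing [q]surjective_pairing eq1 eq2.
Qed.

Lemma nearest_point_exists K x :
  compact K -> K !=set0 ->
  exists2 q, K q & forall y, K y -> sqdist q x <= sqdist y x.
Proof.
move=> cK K_neq0.
have cont_d : {within K, continuous (sqdist ^~ x)}.
  apply: continuous_subspaceT => y; apply: cvgD; apply: cvgM;
  (apply: cvgB; last exact: cvg_cst);
  [exact: cvg_fst|exact: cvg_fst|exact: cvg_snd|exact: cvg_snd].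
have [q /set_mem Kq q_min] := compact_EVT_min K_neq0 cK cont_d.
by exists q => // y /mem_set /q_min.
Qed.

Section NearestPoint.
Variables (K : set (R * R)) (x q : R * R).
Hypothesis Kq : K q.
Hypothesis q_nearest : forall y, K y -> sqdist q x <= sqdist y x.

(* If y gave dot (x - q) (y - q) = c > 0, moving from q towards y by
   t = c / (|y - q|^2 + c) would get strictly closer to x. *)
Lemma nearest_point_obtuse :
  convex_set2 K -> forall y, K y -> dot (x - q) y <= dot (x - q) q.
Proof.
move=> convK y Ky; rewrite leNgt; apply/negP => lt_dot.
pose c := dot (x - q) y - dot (x - q) q.
pose D := sqdist y q.
have c_gt0 : 0 < c by rewrite subr_gt0.
have D_ge0 : 0 <= D by rewrite addr_ge0 ?sqr_ge0.
pose t := c / (D + c).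
have Dc_gt0 : 0 < D + c by lra.
have t_gt0 : 0 < t by rewrite divr_gt0.
have tDc : t * (D + c) = c by rewrite divfK // gt_eqF.
have t_le1 : t <= 1 by rewrite ler_pdivrMr // mul1r lerDr.
have t01 : 0 <= t <= 1 by rewrite ltW.
have := q_nearest (convK _ _ Ky Kq t t01).
have -> : sqdist (t * y.1 + (1 - t) * q.1, t * y.2 + (1 - t) * q.2) x =
          sqdist q x + t * (t * D - 2 * c) by rewrite /D /c /sqdist /dot /=; ring.
rewrite lerDl pmulr_rge0 //; nra.
Qed.

Lemma nearest_point_le :
  K `<=` quadrant -> down_closed K -> quadrant x -> q.1 <= x.1 /\ q.2 <= x.2.
Proof.
move=> Kquad Kdown [x1_ge0 x2_ge0]; have [q1_ge0 q2_ge0] := Kquad _ Kq.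
split; rewrite leNgt; apply/negP => lt_xq.
  have K_xq : K (x.1, q.2).
    by apply: (Kdown _ _ Kq); apply/andP; split; rewrite //= ?lexx // ltW.
  by have := q_nearest K_xq; rewrite /sqdist /=; nra.
have K_qx : K (q.1, x.2).
  by apply: (Kdown _ _ Kq); apply/andP; split; rewrite //= ?lexx // ltW.
by have := q_nearest K_qx; rewrite /sqdist /=; nra.
Qed.

End NearestPoint.

Lemma separation_down_closed K x :
  compact K -> convex_set2 K -> K `<=` quadrant -> down_closed K ->
  K !=set0 -> quadrant x -> ~ K x -> exists2 u, quadrant u & separates K x u.
Proof.
move=> cK convK Kquad Kdown K_neq0 x_ge0 Kx_false.
have [q Kq q_nearest] := nearest_point_exists x cK K_neq0.
have [q1_le q2_le] := nearest_point_le Kq q_nearest Kquad Kdown x_ge0.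
exists (x - q); first by split; rewrite /= subr_ge0.
exists (dot (x - q) q); first exact: nearest_point_obtuse.
have x_neq_q : x <> q by move=> eq_xq; apply: Kx_false; rewrite eq_xq.
have -> : dot (x - q) x = dot (x - q) q + sqdist x q.
  by rewrite /sqdist /dot /=; ring.
by rewrite ltrDl sqdist_gt0.
Qed.

Lemma nat_round_up (r : R) :
  0 <= r -> exists2 k : nat, (0 < k)%N & r < k%:R <= r + 1.
Proof.
move=> r_ge0; exists (Num.truncn r).+1 => //.
by rewrite truncnS_gt -natr1 lerD2r truncn_le.
Qed.

(* The rounding error of k against n u is at most y_1 + y_2 on K. *)
Lemma integral_separation K x u (S : R) :
  K `<=` quadrant -> (forall y, K y -> y.1 + y.2 <= S) ->
  quadrant u -> quadrant x -> separates K x u ->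
  exists k1 k2 : nat, [/\ (0 < k1)%N, (0 < k2)%N & separates K x (k1%:R, k2%:R)].
Proof.
move=> Kquad KS [u1_ge0 u2_ge0] [x1_ge0 x2_ge0] [c Kc lt_cx].
have m_gt0 : 0 < dot u x - c by rewrite subr_gt0.
pose n := (Num.truncn (S / (dot u x - c))).+1.
have S_lt : S < n%:R * (dot u x - c) by rewrite -ltr_pdivrMr // truncnS_gt.
have n_ge0 : 0 <= n%:R :> R by [].
have [k1 k1_gt0 /andP[lo1 hi1]] := nat_round_up (mulr_ge0 n_ge0 u1_ge0).
have [k2 k2_gt0 /andP[lo2 hi2]] := nat_round_up (mulr_ge0 n_ge0 u2_ge0).
exists k1, k2; split => //; exists (n%:R * c + S).
  move=> y Ky; have [y1_ge0 y2_ge0] := Kquad _ Ky.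
  have := ler_wpM2r y1_ge0 hi1; have := ler_wpM2r y2_ge0 hi2.
  have := ler_wpM2l n_ge0 (Kc _ Ky); have := KS _ Ky.
  rewrite /dot /=; lra.
have := ler_wpM2r x1_ge0 (ltW lo1); have := ler_wpM2r x2_ge0 (ltW lo2).
move: S_lt; rewrite /dot /=; lra.
Qed.

Lemma separates_scale K x u (r : R) :
  0 < r -> separates K x (r * u.1, r * u.2) -> separates K x u.
Proof.
move=> r_gt0 [c Kc lt_cx].
have dotZ p : dot (r * u.1, r * u.2) p = r * dot u p by rewrite /dot /=; ring.
exists (c / r).
  by move=> y /Kc; rewrite dotZ ler_pdivlMr // mulrC.
by rewrite ltr_pdivrMr // mulrC -dotZ.
Qed.

Lemma separates_coprime K x (k1 k2 : nat) :
  (0 < k1)%N -> (0 < k2)%N -> separates K x (k1%:R, k2%:R) ->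
  exists a b : nat,
    [/\ (0 < a)%N, (0 < b)%N, coprime a b & separates K x (a%:R, b%:R)].
Proof.
move=> k1_gt0 k2_gt0 sep_k.
pose g := gcdn k1 k2; have g_gt0 : (0 < g)%N by rewrite gcdn_gt0 k1_gt0.
exists (k1 %/ g)%N, (k2 %/ g)%N.
have k1E : k1 = (g * (k1 %/ g))%N by rewrite mulnC divnK ?dvdn_gcdl.
have k2E : k2 = (g * (k2 %/ g))%N by rewrite mulnC divnK ?dvdn_gcdr.
split.
- by rewrite divn_gt0 // dvdn_leq // dvdn_gcdl.
- by rewrite divn_gt0 // dvdn_leq // dvdn_gcdr.
- by rewrite /coprime -(eqn_pmul2l g_gt0) muln_gcdr -k1E -k2E muln1.
- by apply: (@separates_scale _ _ _ g%:R); rewrite ?ltr0n // -!natrM -k1E -k2E.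
Qed.

End Separation.

Arguments quadrant {R}.

Section ConvexToricDomain.
Variables (R : realType) (Om : set (R * R)).
Hypothesis ctd_Om : convex_toric_domain Om.

Lemma ctd_quadrant : Om `<=` quadrant.
Proof. by case: ctd_Om => -[]. Qed.

Lemma ctd_compact : compact Om.
Proof. by case: ctd_Om => -[]. Qed.

Lemma ctd_nonempty : Om !=set0.
Proof.
case: ctd_Om => -[_ _ [e e_gt0 Om_box] _] _.
by exists (0, 0); apply: Om_box; rewrite /= lexx e_gt0.
Qed.

Lemma symmetrize_quadrant p : quadrant p -> symmetrize Om p = Om p.
Proof.
by case=> p1_ge0 p2_ge0; rewrite /symmetrize /= !ger0_norm // -surjective_pairing.
Qed.

Lemma ctd_convex : convex_set2 Om.
Proof.
move=> p q Om_p Om_q t /andP[t_ge0 t_le1].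
have [p1_ge0 p2_ge0] := ctd_quadrant Om_p.
have [q1_ge0 q2_ge0] := ctd_quadrant Om_q.
have s_ge0 : 0 <= 1 - t by rewrite subr_ge0.
rewrite -symmetrize_quadrant; last by split; rewrite /= addr_ge0 ?mulr_ge0.
by case: ctd_Om => _; apply; rewrite ?symmetrize_quadrant ?t_ge0.
Qed.

(* In the convex set symmetrize Om, (q.1, p.2) lies on the segment from
   (-p.1, p.2) to p, and q on the segment from (q.1, -p.2) to (q.1, p.2). *)
Lemma ctd_down_closed : down_closed Om.
Proof.
move=> p q Om_p /andP[q1_ge0 q1_le] /andP[q2_ge0 q2_le].
have [p1_ge0 p2_ge0] := ctd_quadrant Om_p.
have [_ convS] := ctd_Om.
have Sp : symmetrize Om (p.1, p.2).
  by rewrite symmetrize_quadrant // -surjective_pairing.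
have S_p1N : symmetrize Om (- p.1, p.2) by rewrite /symmetrize /= normrN.
have S_q1 : symmetrize Om (q.1, p.2).
  by apply: convex_set2_segment1 S_p1N Sp _ => //; rewrite q1_le andbT; lra.
have S_p2N : symmetrize Om (q.1, - p.2) by rewrite /symmetrize /= normrN.
have := convex_set2_segment2 convS S_p2N S_q1 (_ : - p.2 <= q.2 <= p.2).
rewrite symmetrize_quadrant -?surjective_pairing //; apply.
by rewrite q2_le andbT; lra.
Qed.

Lemma ctd_has_sup u : has_sup [set dot u p | p in Om].
Proof.
have [y Om_y] := ctd_nonempty.
apply: compact_has_sup; first by exists (dot u y), y.
apply: continuous_compact ctd_compact; apply: continuous_subspaceT => p.
by apply: cvgD; apply: cvgM;
  [exact: cvg_cst|exact: cvg_fst|exact: cvg_cst|exact: cvg_snd].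
Qed.

Lemma ctd_sum_bounded : exists S, forall y, Om y -> y.1 + y.2 <= S.
Proof.
exists (sup [set dot (1, 1) p | p in Om]) => y Om_y.
have := sup_upper_bound (ctd_has_sup (1, 1)) (ex_intro2 _ _ y Om_y erefl).
by rewrite /dot /= !mul1r.
Qed.

Lemma ctd_separation x :
  quadrant x -> ~ Om x -> exists2 u, quadrant u & separates Om x u.
Proof.
exact: separation_down_closed ctd_compact ctd_convex ctd_quadrant
  ctd_down_closed ctd_nonempty.
Qed.

Lemma dual_norm_lt_separates K x (a b : nat) :
  K !=set0 -> Om x -> separates K x (a%:R, b%:R) ->
  dual_norm K a b < dual_norm Om a b.
Proof.
move=> [y Ky] Om_x [c Kc lt_cx].
have le_Kc : dual_norm K a b <= c.
  by apply: ge_sup; [exists (dot (a%:R, b%:R) y), y | move=> _ [z /Kc le_z <-]].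
apply: (le_lt_trans le_Kc); apply: (lt_le_trans lt_cx).
by apply: (sup_upper_bound (ctd_has_sup (a%:R, b%:R))); exists x.
Qed.

End ConvexToricDomain.

Theorem lemma3p5 (R : realType) (Om_minus Om_plus : set (R * R)) :
  convex_toric_domain Om_minus ->
  convex_toric_domain Om_plus ->
  (forall a b : nat, (0 < a)%N -> (0 < b)%N -> coprime a b ->
     dual_norm Om_minus a b <= dual_norm Om_plus a b) ->
  Om_minus `<=` Om_plus.
Proof.
move=> ctd_minus ctd_plus le_dual x Om_minus_x; apply: contrapT => Om_plus_x.
have x_ge0 := ctd_quadrant ctd_minus Om_minus_x.
have [u u_ge0 sep_u] := ctd_separation ctd_plus x_ge0 Om_plus_x.
have [S S_bound] := ctd_sum_bounded ctd_plus.
have [k1 [k2 [k1_gt0 k2_gt0 sep_k]]] :=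
  integral_separation (ctd_quadrant ctd_plus) S_bound u_ge0 x_ge0 sep_u.
have [a [b [a_gt0 b_gt0 coprime_ab sep_ab]]] :=
  separates_coprime k1_gt0 k2_gt0 sep_k.
have := le_dual a b a_gt0 b_gt0 coprime_ab.
by rewrite leNgt (dual_norm_lt_separates ctd_minus (ctd_nonempty ctd_plus)
  Om_minus_x sep_ab).
Qed.
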